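(* Let $G=(V,D,B)$ be a mixed graph with $V=\{1,\dots,n\}$, and let $\Lambda=(\lambda_{uv})$ and $\Omega$ be the matrices of indeterminates associated with the directed and bidirected parts of $G$. Let $D_L,D_R\subset D$ and define $n\times n$ matrices $\Lambda^L,\Lambda^R$ by $\Lambda^L_{uv}=\lambda_{uv}$ if $(u,v)\in D_L$ and $0$ otherwise, and $\Lambda^R_{uv}=\lambda_{uv}$ if $(u,v)\in D_R$ and $0$ otherwise. Let $G^*_{\mathrm{flow}}=(V^*,D^* )$ be the directed graph with $V^*=\{1,\dots,n\}\cup\{1',\dots,n'\}$ and $D^*$ consisting of: $i\to j$ if $(j,i)\in D_L$; $i\to i'$ for all $i\in V$; $i\to j'$ if $(i,j)\in B$; $i'\to j'$ if $(i,j)\in D_R$; all edges and vertices have capacity $1$. Let $\Gamma=(I-\Lambda^L)^{-T}\Omega(I-\Lambda^R)^{-1}$. Then for any $S,T\subset V$ with $|S|=|T|=k$, if the maximum flow from $S$ to $T'=\{t':t\in T\}$ in $G^*_{\mathrm{flow}}$ is less than $k$, then $|\Gamma_{S,T}|=0$.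
   Context: A mixed graph $G=(V,D,B)$ has directed edges $D\subset V\times V$ and symmetric bidirected edges $B\subset V\times V$, without self-loops. The matrix of indeterminates $\Lambda$ has an indeterminate $\lambda_{uv}$ in position $(u,v)$ if $(u,v)\in D$ and $0$ otherwise; $\Omega$ is symmetric with indeterminate diagonal entries, an indeterminate $\omega_{uv}=\omega_{vu}$ if $(u,v)\in B$, and $0$ otherwise. Entries of $\Gamma$ are formal power series (rational functions) in these indeterminates, and $|\Gamma_{S,T}|=0$ means that the determinant of the submatrix with rows $S$ and columns $T$ is identically zero. Maximum flow allows multiple sources/sinks and vertex capacities. *)

From HB Require Import structures.
From mathcomp Require Import all_boot all_order all_algebra.
From mathcomp Require Import fraction.
From mathcomp Require Import mpoly.

Set Implicit Arguments.
Unset Strict Implicit.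
Unset Printing Implicit Defensive.

Import Order.TTheory GRing.Theory Num.Theory.
Local Open Scope ring_scope.

Section MixedGraph.
Variable n : nat.

(* Indeterminates: lambda_{uv} is indexed by inl (u,v), omega_{uv} by inr (u,v)
   with (u,v) normalised so that u <= v (hence omega_{uv} = omega_{vu}). *)
Definition var_t := (('I_n * 'I_n) + ('I_n * 'I_n))%type.
Definition nvar : nat := #|{: var_t}|.

Definition polyring := {mpoly int[nvar]}.
Definition ratfun := {fraction polyring}.

Definition indet (x : var_t) : ratfun := @FracField.tofrac polyring ('X_(enum_rank x) : polyring).

Definition lam (u v : 'I_n) : ratfun := indet (inl (u, v)).
Definition omega (u v : 'I_n) : ratfun :=
  indet (inr (if (u <= v)%N then (u, v) else (v, u))).

(* Lambda restricted to a set of directed edges E (E = D gives Lambda;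
   E = D_L gives Lambda^L; E = D_R gives Lambda^R). *)
Definition LambdaOn (E : {set 'I_n * 'I_n}) : 'M[ratfun]_n :=
  \matrix_(u, v) (if (u, v) \in E then lam u v else 0).

Definition Omega (B : {set 'I_n * 'I_n}) : 'M[ratfun]_n :=
  \matrix_(u, v) (if (u == v) || ((u, v) \in B) then omega u v else 0).

Definition Gamma (DL DR B : {set 'I_n * 'I_n}) : 'M[ratfun]_n :=
  (invmx (1%:M - LambdaOn DL))^T *m Omega B *m invmx (1%:M - LambdaOn DR).

(* |A_{S,T}|: determinant of the submatrix with rows S and columns T
   (in increasing order), when #|T| = #|S|. *)
Definition minor (R : comNzRingType) (A : 'M[R]_n) (S T : {set 'I_n})
    (h : #|T| = #|S|) : R :=
  \det (castmx (erefl #|S|, h)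
          (mxsub (fun i : 'I_#|S| => enum_val i) (fun j : 'I_#|T| => enum_val j) A)).

(* The flow graph G*_flow: vertices inl i = i, inr i = i'. *)
Definition vstar := ('I_n + 'I_n)%type.

Definition flow_edge (DL DR B : {set 'I_n * 'I_n}) (x y : vstar) : bool :=
  match x, y with
  | inl i, inl j => (j, i) \in DL
  | inl i, inr j => (i == j) || ((i, j) \in B)
  | inr i, inr j => (i, j) \in DR
  | inr _, inl _ => false
  end.

(* A flow from the source set Src to the sink set Snk in G*_flow with all
   edge and vertex capacities equal to 1 (multiple sources/sinks handled via
   a super-source injecting [inj x] >= 0 at sources and a super-sink
   extracting [ext x] >= 0 at sinks). *)
Definition is_flow (DL DR B : {set 'I_n * 'I_n}) (Src Snk : {set vstar})
    (f : vstar -> vstar -> rat) (inj ext : vstar -> rat) : Prop :=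
  (forall x y, 0 <= f x y) /\
  (forall x y, f x y <= 1) /\
  (forall x y, ~~ flow_edge DL DR B x y -> f x y = 0) /\
  (forall x, 0 <= inj x /\ (x \notin Src -> inj x = 0)) /\
  (forall x, 0 <= ext x /\ (x \notin Snk -> ext x = 0)) /\
  (forall x, inj x + \sum_(y : vstar) f y x = \sum_(y : vstar) f x y + ext x) /\
  (* vertex capacity: total flow through x is at most 1 *)
  (forall x, inj x + \sum_(y : vstar) f y x <= 1).

Definition flow_value (inj : vstar -> rat) : rat := \sum_(x : vstar) inj x.

Definition maxflow_lt (DL DR B : {set 'I_n * 'I_n}) (Src Snk : {set vstar})
    (k : nat) : Prop :=
  forall f inj ext, is_flow DL DR B Src Snk f inj ext ->
    flow_value inj < k%:R.

End MixedGraph.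

(* If the maximum flow is smaller than k, Menger's theorem (via Ford-Fulkerson
   on the vertex-split network) gives a set C of fewer than k vertices of
   G*_flow meeting every path from S to T'.  With W = [[Lambda_L^T, Omega],
   [0, Lambda_R]] the weighted adjacency matrix of G*_flow,
   (I - W)^-1 = [[(I - Lambda_L)^-T, Gamma], [0, (I - Lambda_R)^-1]], so
   Gamma_{S,T} is a submatrix of (I - W)^-1, whose entries sum the weights of
   paths.  Cutting paths at their first vertex in C splits (I - W)^-1 as
   F E_{~C} + F E_C (I - W)^-1, where F never leads from the vertices reachable
   from S outside C to the other vertices; on rows S and columns T' only the
   second term survives, and it factors through the |C| coordinates of C.
   Hence rank Gamma_{S,T} <= |C| < k.  All inverses exist because the
   determinants involved are polynomials with constant term 1. *)

From HB Require Import structures.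
From mathcomp Require Import all_boot all_order all_algebra.
From mathcomp Require Import fraction.
From mathcomp Require Import mpoly.
From mathcomp Require Import zify ring.

Set Implicit Arguments.
Unset Strict Implicit.
Unset Printing Implicit Defensive.

Import Order.TTheory GRing.Theory Num.Theory.
Local Open Scope ring_scope.

Section MaxFlowMinCut.
Variable Y : finType.
Variable c : Y -> Y -> int.
Variables s t : Y.
Hypothesis s_neq_t : s != t.
Hypothesis c_ge0 : forall u v, 0 <= c u v.

Definition skew_flow (phi : Y -> Y -> int) :=
  [/\ forall u v, phi u v = - phi v u, forall u v, phi u v <= c u v &
      forall u, u != s -> u != t -> \sum_v phi u v = 0].

Definition net_flow (phi : Y -> Y -> int) : int := \sum_v phi s v.

Definition residual (phi : Y -> Y -> int) := [rel u v | phi u v < c u v].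

Definition cut_capacity (R : {set Y}) : int := \sum_(u in R) \sum_(v | v \notin R) c u v.

Fixpoint path_flow (x : Y) (p : seq Y) (u v : Y) : int :=
  if p is y :: p' then
    ((x == u) && (y == v))%:Z - ((x == v) && (y == u))%:Z + path_flow y p' u v
  else 0.

Lemma sum_path_flow x p u :
  \sum_v path_flow x p u v = (x == u)%:Z - (last x p == u)%:Z.
Proof.
have sum_eq (a : bool) (y : Y) : \sum_v ((a && (y == v)) : nat)%:Z = (a : nat)%:Z.
  rewrite (bigD1 y) //= eqxx andbT big1 ?addr0 // => v /negbTE.
  by rewrite eq_sym => ->; rewrite andbF.
elim: p x => [|y p IH] x /=; first by rewrite big1 // subrr.
rewrite !big_split /= IH sumrN sum_eq.
under eq_bigr do rewrite andbC.
rewrite sum_eq; ring.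
Qed.

Lemma path_flowN x p u v : path_flow x p u v = - path_flow x p v u.
Proof. by elim: p x => [|y p IH] x //=; rewrite IH; ring. Qed.

Lemma path_flow_notin x p u v : u \notin x :: p -> path_flow x p u v = 0.
Proof.
elim: p x => [|y p IH] x //=; rewrite !inE !negb_or => /and3P[xu yu up].
rewrite IH ?inE ?negb_or ?yu ?up // (eq_sym x u) (negbTE xu) (eq_sym y u) (negbTE yu).
by rewrite andbF.
Qed.

(* Along a simple residual path every pair of nodes is used at most once,
   and in one direction only. *)
Lemma path_flow_le_cap phi x p : (forall u v, phi u v <= c u v) ->
  path (residual phi) x p -> uniq (x :: p) ->
  forall u v, phi u v + path_flow x p u v <= c u v.
Proof.
move=> cap; elim: p x => [|y p IH] x /=; first by move=> _ _ u v; rewrite addr0.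
move=> /andP[rxy pp] /andP[xnot up] u v.
have xy : x != y by apply: contraNneq xnot => ->; rewrite inE eqxx.
have off w : path_flow y p x w = 0 /\ path_flow y p w x = 0.
  by split; [exact: path_flow_notin | rewrite path_flowN path_flow_notin ?oppr0].
move: (IH _ pp up u v) (cap u v) rxy (off u) (off v) (cap y x).
case: (eqVneq x u) => [?|?]; case: (eqVneq y v) => [?|?];
  case: (eqVneq x v) => [?|?]; case: (eqVneq y u) => [?|?] //=; subst;
  rewrite ?eqxx ?(negbTE xy) ?(eq_sym y x) ?(negbTE xy) //=; lia.
Qed.

Lemma augment_flow phi : skew_flow phi -> connect (residual phi) s t ->
  exists2 phi', skew_flow phi' & net_flow phi' = net_flow phi + 1.
Proof.
case=> skew cap bal /connectP[p0 pp0 lt]; move: lt.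
case: (shortenP pp0) => p pp up _ t_last.
exists (fun u v => phi u v + path_flow s p u v); last first.
  by rewrite /net_flow big_split /= sum_path_flow -t_last eqxx eq_sym (negbTE s_neq_t) subr0.
split=> [u v|u v|u us ut]; first by rewrite skew path_flowN opprD.
  exact: path_flow_le_cap.
by rewrite big_split /= bal // sum_path_flow -t_last !(eq_sym _ u) (negbTE us) (negbTE ut) subrr.
Qed.

Lemma residual_cut_capacity phi : skew_flow phi -> ~~ connect (residual phi) s t ->
  net_flow phi = cut_capacity [set v | connect (residual phi) s v].
Proof.
case=> skew cap bal not_st; set R := [set v | _].
have sR : s \in R by rewrite inE connect0.
have saturated u v : u \in R -> v \notin R -> phi u v = c u v.
  rewrite !inE => su; apply: contraNeq => ne; apply: connect_trans su (connect1 _).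
  by rewrite /= lt_neqAle ne cap.
have out_R : \sum_(u in R) \sum_v phi u v = net_flow phi.
  rewrite (bigD1 s) //= [X in _ + X]big1 ?addr0 // => u /andP[uR us]; apply: bal => //.
  by apply: contraNneq not_st => ut; move: uR; rewrite inE ut.
have inside_R : \sum_(u in R) \sum_(v in R) phi u v = 0.
  suff : \sum_(u in R) \sum_(v in R) phi u v = - \sum_(u in R) \sum_(v in R) phi u v.
    by lia.
  rewrite {1}exchange_big -sumrN; apply: eq_bigr => u _.
  by rewrite -sumrN; apply: eq_bigr => v _.
transitivity (\sum_(u in R) (\sum_v phi u v - \sum_(v in R) phi u v)).
  by rewrite sumrB inside_R subr0.
apply: eq_bigr => u uR; rewrite (bigID (mem R)) /= addrAC subrr add0r.
by apply: eq_bigr => v vR; apply: saturated.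
Qed.

Lemma net_flow_le phi : skew_flow phi -> net_flow phi <= \sum_v c s v.
Proof. by case=> _ cap _; apply: ler_sum => v _. Qed.

(* Ford-Fulkerson: augment until no residual path is left; the distance of
   the net flow to the capacity out of [s] bounds the number of rounds. *)
Lemma exists_maximal_flow :
  exists2 phi, skew_flow phi & ~~ connect (residual phi) s t.
Proof.
have zero_flow : skew_flow (fun _ _ => 0).
  by split=> [u v|u v|u _ _]; rewrite ?oppr0 ?c_ge0 ?big1.
suff rounds (m : nat) : forall phi, skew_flow phi -> \sum_v c s v - net_flow phi <= m%:Z ->
    exists2 phi, skew_flow phi & ~~ connect (residual phi) s t.
  have := rounds (absz (\sum_v c s v - net_flow (fun _ _ => 0))%R) _ zero_flow.
  by rewrite abszE ler_norm; apply.
elim: m => [|m IH] phi fphi hm; have [st|] := boolP (connect (residual phi) s t);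
  try by exists phi.
all: have [phi' fphi' val'] := augment_flow fphi st.
  by have := net_flow_le fphi'; lia.
by apply: (IH phi' fphi'); lia.
Qed.

Lemma max_flow_min_cut : exists phi (R : {set Y}),
  [/\ skew_flow phi, s \in R, t \notin R & net_flow phi = cut_capacity R].
Proof.
have [phi fphi not_st] := exists_maximal_flow.
exists phi, [set v | connect (residual phi) s v].
by rewrite !inE connect0 residual_cut_capacity.
Qed.
End MaxFlowMinCut.

Lemma sumr_le_subset (R : numDomainType) (I : finType) (P Q : pred I) (F : I -> R) :
  (forall i, 0 <= F i) -> {subset P <= Q} -> \sum_(i | P i) F i <= \sum_(i | Q i) F i.
Proof.
move=> F_ge0 PQ; rewrite [leRHS](bigID P) /=.
have -> : \sum_(i | Q i && P i) F i = \sum_(i | P i) F i.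
  by apply: eq_bigl => i; apply: andb_idl; exact: PQ.
by rewrite lerDl sumr_ge0.
Qed.

Definition unit_flow (X : finType) (e : rel X) (Src Snk : {set X})
    (f : X -> X -> rat) (inj ext : X -> rat) : Prop :=
  (forall x y, 0 <= f x y) /\
  (forall x y, f x y <= 1) /\
  (forall x y, ~~ e x y -> f x y = 0) /\
  (forall x, 0 <= inj x /\ (x \notin Src -> inj x = 0)) /\
  (forall x, 0 <= ext x /\ (x \notin Snk -> ext x = 0)) /\
  (forall x, inj x + \sum_(y : X) f y x = \sum_(y : X) f x y + ext x) /\
  (forall x, inj x + \sum_(y : X) f y x <= 1).

(* [R] witnesses that every [e]-path from [A] to [Z] meets [C]. *)
Definition separating (X : finType) (e : rel X) (A Z C R : {set X}) :=
  [/\ A \subset R, R :&: Z \subset C &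
      forall x y, x \in R -> x \notin C -> e x y -> y \in R].

Section Menger.
Variables (X : finType) (e : rel X).
Hypothesis e_irrefl : irreflexive e.
Variables (A Z : {set X}) (k : nat).
Hypothesis flow_lt : forall f inj ext, unit_flow e A Z f inj ext -> \sum_x inj x < k%:R.

(* Vertex splitting: [x] becomes [vin x -> vout x] with capacity 1; edges,
   sources and sinks get capacity [k], which no cut of capacity < k can cross. *)
Definition split_node := ((X * bool) + bool)%type.
Local Notation vin x := (inl (x, false)).
Local Notation vout x := (inl (x, true)).
Local Notation source := (inr false).
Local Notation sink := (inr true).

Definition split_cap (u v : split_node) : int :=
  match u, v with
  | vin x, vout y => (x == y)%:Z
  | vout x, vin y => (e x y)%:Z * k%:Z
  | source, vin y => (y \in A)%:Z * k%:Z
  | vout x, sink => (x \in Z)%:Z * k%:Z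
  | _, _ => 0
  end.

Lemma split_cap_ge0 u v : 0 <= split_cap u v.
Proof. by case: u v => [[x [|]]|[|]] [[y [|]]|[|]]. Qed.

Lemma sum_split_node (G : split_node -> int) :
  \sum_v G v = \sum_x (G (vout x) + G (vin x)) + (G sink + G source).
Proof.
rewrite big_sumType /= big_bool; congr (_ + _).
transitivity (\sum_x \sum_b G (inl (x, b))).
  by rewrite pair_bigA; apply: eq_bigr => -[x b].
by apply: eq_bigr => x _; rewrite big_bool.
Qed.

Section SplitFlow.
Variable phi : split_node -> split_node -> int.
Hypothesis phi_flow : skew_flow split_cap source sink phi.

Definition edge_flow x y := if e x y then phi (vout x) (vin y) else 0.
Definition inflow x := phi source (vin x).
Definition outflow x := phi (vout x) sink.
Definition throughflow x := phi (vin x) (vout x).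

Lemma split_flow_ge u v : - split_cap v u <= phi u v.
Proof. by case: phi_flow => skew cap _; rewrite skew lerN2 cap. Qed.

Lemma split_flow_off u v : split_cap u v = 0 -> split_cap v u = 0 -> phi u v = 0.
Proof.
case: phi_flow => skew cap _ uv vu; apply/eqP; rewrite eq_le.
by rewrite -{1}uv cap /= -oppr_le0 -skew -vu cap.
Qed.

Lemma split_flow_in_out y x :
  phi (vin y) (vout x) = (if x == y then throughflow y else 0) - edge_flow x y.
Proof.
case: phi_flow => skew _ _; rewrite /edge_flow.
have [->|xy] := eqVneq x y; first by rewrite e_irrefl subr0.
case: ifP => exy; first by rewrite sub0r skew.
by rewrite subr0 split_flow_off //= ?exy // eq_sym (negbTE xy).
Qed.

Lemma inflow_balance y : inflow y + \sum_x edge_flow x y = throughflow y.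
Proof.
case: phi_flow => skew _ bal; have := bal (vin y) isT isT; rewrite sum_split_node.
under eq_bigr do rewrite split_flow_in_out [phi _ (vin _)]split_flow_off // addr0.
rewrite (split_flow_off (v := sink)) // [phi _ source]skew sumrB -big_mkcond big_pred1_eq.
by rewrite sub0r addrAC => /eqP; rewrite subr_eq0 subr_eq => /eqP ->; rewrite addrC.
Qed.

Lemma outflow_balance y : \sum_x edge_flow y x + outflow y = throughflow y.
Proof.
case: phi_flow => skew _ bal; have := bal (vout y) isT isT; rewrite sum_split_node.
under eq_bigr => x _.
  rewrite [phi _ (vin x)]skew split_flow_in_out [phi _ (vout x)]split_flow_off //.
  over.
rewrite (split_flow_off (v := source)) //= addr0.
under eq_bigr do rewrite add0r opprB (eq_sym y).
rewrite sumrB -[X in _ - X]big_mkcond big_pred1_eq.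
by move/eqP; rewrite addrAC subr_eq0 => /eqP.
Qed.

Lemma throughflow_le1 x : throughflow x <= 1.
Proof. by case: phi_flow => _ cap _; have := cap (vin x) (vout x); rewrite /= eqxx. Qed.

Lemma edge_flow_ge0 x y : 0 <= edge_flow x y.
Proof.
rewrite /edge_flow; case: ifP => // exy.
have yx : (y == x) = false by apply: contraTF exy => /eqP ->; rewrite e_irrefl.
by have := split_flow_ge (vout x) (vin y); rewrite /= yx.
Qed.

Lemma net_flow_split : net_flow source phi = \sum_x inflow x.
Proof.
rewrite /net_flow sum_split_node !split_flow_off // !addr0.
by apply: eq_bigr => x _; rewrite [phi _ (vout _)]split_flow_off // add0r.
Qed.

Lemma split_flow_unit : unit_flow e A Z (fun x y => (edge_flow x y)%:~R)
  (fun x => (inflow x)%:~R) (fun x => (outflow x)%:~R).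
Proof.
have inflow_ge0 x : 0 <= inflow x by have := split_flow_ge source (vin x).
have outflow_ge0 x : 0 <= outflow x by have := split_flow_ge (vout x) sink.
split=> [x y|]; first by rewrite ler0z edge_flow_ge0.
split=> [x y|].
  rewrite -[1]/((1%:Z)%:~R) ler_int; apply: le_trans (throughflow_le1 y).
  rewrite -inflow_balance (bigD1 x) //= addrCA lerDl addr_ge0 ?inflow_ge0 //.
  by apply: sumr_ge0 => i _; exact: edge_flow_ge0.
split=> [x y exy|]; first by rewrite /edge_flow (negbTE exy).
split=> [x|].
  by rewrite ler0z inflow_ge0; split=> // xA; rewrite /inflow split_flow_off //= (negbTE xA).
split=> [x|].
  by rewrite ler0z outflow_ge0; split=> // xZ; rewrite /outflow split_flow_off //= (negbTE xZ).
split=> x; rewrite -!rmorph_sum -!intrD ?inflow_balance ?outflow_balance //.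
by rewrite -[1]/((1%:Z)%:~R) ler_int throughflow_le1.
Qed.

End SplitFlow.

Lemma split_flow_lt phi : skew_flow split_cap source sink phi -> net_flow source phi < k%:Z.
Proof.
move=> phi_flow; have := flow_lt (split_flow_unit phi_flow).
by rewrite -rmorph_sum -net_flow_split // -[k%:R]/((k%:Z)%:~R) ltr_int.
Qed.

Section SplitCut.
Variable R : {set split_node}.
Hypotheses (source_in : source \in R) (sink_notin : sink \notin R).
Hypothesis cut_lt : cut_capacity split_cap R < k%:Z.

Definition cut_vertices := [set x | (vin x \in R) && (vout x \notin R)].
Definition cut_region := [set x | vin x \in R].

Lemma split_cap_cross_lt u v : u \in R -> v \notin R -> split_cap u v < k%:Z.
Proof.
move=> uR vR; apply: le_lt_trans cut_lt.
apply: (@le_trans _ _ (\sum_(v' | v' \notin R) split_cap u v')).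
  by rewrite (bigD1 v) //= lerDl sumr_ge0 // => *; exact: split_cap_ge0.
rewrite /cut_capacity [leRHS](bigD1 u) //= lerDl.
by apply: sumr_ge0 => *; apply: sumr_ge0 => *; exact: split_cap_ge0.
Qed.

Lemma card_cut_vertices : #|cut_vertices|%:Z <= cut_capacity split_cap R.
Proof.
pose g u := \sum_(v | v \notin R) split_cap u v.
have g_ge0 u : 0 <= g u by apply: sumr_ge0 => *; exact: split_cap_ge0.
have -> : #|cut_vertices|%:Z = \sum_(x in cut_vertices) split_cap (vin x) (vout x).
  by rewrite (eq_bigr (fun _ => 1)) => [|x _]; rewrite ?sumr_const ?natz //= eqxx.
apply: (@le_trans _ _ (\sum_(x in cut_vertices) g (vin x))).
  apply: ler_sum => x; rewrite inE => /andP[_ xo].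
  by rewrite /g (bigD1 (vout x)) // lerDl sumr_ge0 // => *; exact: split_cap_ge0.
rewrite -(big_imset g (h := fun x => vin x)) /=; last by move=> x y _ _ [].
by apply: sumr_le_subset => // u /imsetP[x]; rewrite inE => /andP[xR _] ->.
Qed.

Lemma cut_region_separating : separating e A Z cut_vertices cut_region.
Proof.
have k_edge u v : u \in R -> split_cap u v = k%:Z -> v \in R.
  move=> uR uv; apply: contraT => vR.
  by have := split_cap_cross_lt uR vR; rewrite uv ltxx.
split.
- by apply/subsetP => a aA; rewrite inE; apply: (k_edge source); rewrite //= aA mul1r.
- apply/subsetP => z; rewrite !inE => /andP[zR zZ]; rewrite zR /=.
  apply/negP => zo; have := k_edge _ sink zo; rewrite /= zZ mul1r (negbTE sink_notin).
  by move/(_ erefl).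
- move=> x y; rewrite !inE => xR; rewrite xR /= negbK => xo exy.
  by apply: (k_edge (vout x)); rewrite //= exy mul1r.
Qed.

End SplitCut.

Theorem menger_separator :
  exists C R : {set X}, (#|C| < k)%N /\ separating e A Z C R.
Proof.
have [phi [R [phi_flow source_in sink_notin cutE]]] :=
  @max_flow_min_cut split_node split_cap source sink isT split_cap_ge0.
have cut_lt := split_flow_lt phi_flow; rewrite cutE in cut_lt.
exists (cut_vertices R), (cut_region R); split; last exact: cut_region_separating.
by rewrite -ltz_nat (le_lt_trans (card_cut_vertices R)).
Qed.

End Menger.

Section Masks.
Variables (R : pzRingType) (N : nat).
Implicit Types (A : {set 'I_N}) (M : 'M[R]_N).

Definition mask_mx A : 'M[R]_N := diag_mx (\row_i (i \in A)%:R).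

Lemma mul_mask_mx A M : mask_mx A *m M = \matrix_(i, j) ((i \in A)%:R * M i j).
Proof. by rewrite mul_diag_mx; apply/matrixP => i j; rewrite !mxE. Qed.

Lemma mul_mx_mask M A : M *m mask_mx A = \matrix_(i, j) (M i j * (j \in A)%:R).
Proof. by rewrite mul_mx_diag; apply/matrixP => i j; rewrite !mxE. Qed.

Lemma mask_mxC A : mask_mx A + mask_mx (~: A) = 1%:M.
Proof.
apply/matrixP => i j; rewrite !mxE inE.
by case: (i \in A); case: (i == j); rewrite ?mulr1n ?mulr0n ?addr0 ?add0r.
Qed.

Lemma mask_mxT : mask_mx setT = 1%:M.
Proof. by apply/matrixP => i j; rewrite !mxE inE. Qed.

Lemma mulmx_mask_mxC A : mask_mx A *m mask_mx (~: A) = 0.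
Proof.
apply/matrixP => i j; rewrite mul_mask_mx !mxE inE.
by case: (i \in A); case: (i == j); rewrite ?mulr1n ?mulr0n ?mul0r ?mulr0.
Qed.

End Masks.

Lemma map_mask_mx (R S : pzRingType) (f : {rmorphism R -> S}) N (A : {set 'I_N}) :
  map_mx f (mask_mx R A) = mask_mx S A.
Proof.
by rewrite map_diag_mx; congr diag_mx; apply/matrixP => i j; rewrite !mxE rmorph_nat.
Qed.

Section SeparatedInverse.
Variables (K : fieldType) (N : nat).
Implicit Types (A C Rg : {set 'I_N}) (W X P : 'M[K]_N).
Local Notation E := (@mask_mx K N).

(* [mask_mx A] factors through [#|A|]-dimensional space via the rows of the
   identity indexed by [A]. *)
Lemma mxrank_mul_mask_le m p (X : 'M[K]_(m, N)) (Y : 'M[K]_(N, p)) A :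
  (\rank (X *m E A *m Y) <= #|A|)%N.
Proof.
pose sel : 'M[K]_(#|A|, N) := \matrix_(i, j) (enum_val i == j)%:R.
have selE : sel^T *m sel = E A.
  apply/matrixP => a b; rewrite !mxE; under eq_bigr do rewrite /sel !mxE.
  rewrite -(big_enum_val (fun x : 'I_N => (x == a)%:R * (x == b)%:R)).
  have [aA|aA] := boolP (a \in A).
    rewrite (bigD1 a) //= eqxx mul1r big1 ?addr0 => [|x /andP[_ /negbTE ->]]; last first.
      by rewrite mul0r.
    by case: (a == b).
  rewrite mul0rn big1 // => x xA.
  have -> : (x == a) = false by apply: contraNF aA => /eqP <-.
  by rewrite mul0r.
rewrite -selE mulmxA -mulmxA; apply: leq_trans (mxrankM_maxl _ _) _.
exact: rank_leq_col.
Qed.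

(* Block-triangular matrices have block-triangular inverses: on the rows of
   [Rg], [(1 - X)^-1] agrees with the inverse [G] of [1 - X E_Rg]. *)
Lemma mask_invmx_closed X Rg :
  E Rg *m X *m E (~: Rg) = 0 ->
  (1%:M - X) \in unitmx -> (1%:M - X *m E Rg) \in unitmx ->
  E Rg *m invmx (1%:M - X) *m E (~: Rg) = 0.
Proof.
move=> closed X_unit G_unit; set G := invmx (1%:M - X *m E Rg).
have G_id : G *m E (~: Rg) = E (~: Rg).
  have h : (1%:M - X *m E Rg) *m E (~: Rg) = E (~: Rg).
    by rewrite mulmxBl mul1mx -mulmxA mulmx_mask_mxC mulmx0 subr0.
  by rewrite -{1}h mulmxA mulVmx // mul1mx.
have GXE : E Rg *m G *m (X *m E (~: Rg)) = 0.
  rewrite -[G]mulmx1 -(mask_mxC _ Rg) !mulmxDr mulmxDl G_id mulmx_mask_mxC mul0mx addr0.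
  by rewrite -!mulmxA [E Rg *m (X *m _)]mulmxA closed !mulmx0.
have left_inv : E Rg *m G *m (1%:M - X) = E Rg.
  have -> : 1%:M - X = (1%:M - X *m E Rg) - X *m E (~: Rg).
    by rewrite -{1}[X]mulmx1 -(mask_mxC _ Rg) mulmxDr opprD addrA.
  by rewrite mulmxBr -mulmxA mulVmx // mulmx1 GXE subr0.
rewrite -left_inv -[E Rg *m G *m _ *m invmx _]mulmxA mulmxV // mulmx1.
by rewrite -mulmxA G_id mulmx_mask_mxC.
Qed.

Lemma invmx_mask_split W P C :
  (1%:M - W) *m P = 1%:M -> (1%:M - E (~: C) *m W) \in unitmx ->
  P = invmx (1%:M - E (~: C) *m W) *m E (~: C) + invmx (1%:M - E (~: C) *m W) *m E C *m P.
Proof.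
move=> hP F_unit; set Y := _ + _.
have PW : P *m (1%:M - W) = 1%:M := mulmx1C hP.
have YW : Y *m (1%:M - W) = 1%:M.
  rewrite /Y mulmxDl -!mulmxA PW mulmx1 -mulmxDr mulmxBr mulmx1.
  by rewrite addrAC -[E (~: C) + _]addrC mask_mxC mulVmx.
by rewrite -[Y]mulmx1 -hP mulmxA YW mul1mx.
Qed.

(* With [F] the inverse of [1 - W] cut at the rows of [C], [F] never leads from
   [Rg] out of [Rg] and [P = F E_~C + F E_C P]; on the rows [rho] and columns
   [gam] only the second term survives, and it factors through [C]. *)
Lemma rank_submx_separated W P C Rg m m' (rho : 'I_m -> 'I_N) (gam : 'I_m' -> 'I_N) :
  (1%:M - W) *m P = 1%:M ->
  (forall A B, (1%:M - E A *m W *m E B) \in unitmx) ->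
  (forall u v, u \in Rg -> u \notin C -> v \notin Rg -> W u v = 0) ->
  (forall i, rho i \in Rg) -> (forall j, gam j \in Rg -> gam j \in C) ->
  (\rank (mxsub rho gam P) <= #|C|)%N.
Proof.
move=> hP W_unit W_closed rhoR gamC; set W1 := E (~: C) *m W.
have W1_unit : (1%:M - W1) \in unitmx by have := W_unit (~: C) setT; rewrite mask_mxT mulmx1.
have W1_closed : E Rg *m W1 *m E (~: Rg) = 0.
  apply/matrixP => u v; rewrite mul_mx_mask mul_mask_mx /W1 mul_mask_mx !mxE !inE.
  have [uR|] := boolP (u \in Rg); have [uC|] := boolP (u \in C);
    have [vR|vR] := boolP (v \in Rg); rewrite /= ?mul0r ?mulr0 ?mul1r ?mulr1 //.
  by move=> uC; exact: W_closed.
have F_closed := mask_invmx_closed W1_closed W1_unit (W_unit (~: C) Rg).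
set F := invmx (1%:M - W1) in F_closed.
have -> : mxsub rho gam P = mxsub rho gam (E Rg *m F *m E C *m P).
  apply/matrixP => i j; rewrite [LHS]mxE [RHS]mxE.
  have -> : P (rho i) (gam j) = (E Rg *m P) (rho i) (gam j).
    by rewrite mul_mask_mx mxE rhoR mul1r.
  rewrite {1}(invmx_mask_split hP W1_unit) mulmxDr !mulmxA [LHS]mxE.
  suff -> : (E Rg *m F *m E (~: C)) (rho i) (gam j) = 0 by rewrite add0r.
  rewrite mul_mx_mask mxE inE; have [//|vC] := boolP (gam j \in C); first by rewrite mulr0.
  have vR : gam j \notin Rg by apply: contra vC; exact: gamC.
  move/matrixP/(_ (rho i) (gam j)): F_closed.
  by rewrite mul_mx_mask !mxE inE vR mulr1 => ->.
by rewrite mxsub_mul -mul_rowsub_mx mxrank_mul_mask_le.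
Qed.

End SeparatedInverse.

Lemma det_eq0_rank_lt (K : fieldType) m (A : 'M[K]_m) : (\rank A < m)%N -> \det A = 0.
Proof.
move=> rkA; apply/eqP; apply: contraTT rkA => detA.
by rewrite -leqNgt mxrank_unit // unitmxE unitfE.
Qed.

Lemma mulmx_1B_block_inv (R : comNzRingType) m (L Om Rr Li Ri : 'M[R]_m) :
  Li *m (1%:M - L) = 1%:M -> (1%:M - Rr) *m Ri = 1%:M ->
  (1%:M - block_mx L^T Om 0 Rr) *m block_mx Li^T (Li^T *m Om *m Ri) 0 Ri = 1%:M.
Proof.
move=> hL hR; rewrite (scalar_mx_block m m 1) opp_block_mx add_block_mx mulmx_block.
have hLT : (1%:M - L^T) *m Li^T = 1%:M by rewrite -trmx1 -linearB -trmx_mul hL.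
rewrite !mulmxA hLT mul1mx hR !sub0r !mulNmx !mulmx0 !mul0mx !oppr0 !addr0 add0r subrr.
by rewrite -scalar_mx_block.
Qed.

Section FlowMatrix.
Variable n : nat.
Implicit Types (E B D DL DR : {set 'I_n * 'I_n}).
Local Notation tofrac := (@FracField.tofrac (polyring n)).
Local Notation eval0 := (meval (fun _ => 0)).

(* [eval0] sets all indeterminates to 0: [det (1 - M)] evaluates to 1. *)
Lemma unitmx_1B_tofrac m (M : 'M[polyring n]_m) :
  map_mx eval0 M = 0 -> (1%:M - map_mx tofrac M) \in unitmx.
Proof.
move=> M0; rewrite unitmxE unitfE -(map_mx1 tofrac) -map_mxB det_map_mx tofrac_eq0.
apply: contraTneq isT => det0; have := congr1 eval0 det0.
by rewrite -det_map_mx map_mxB map_mx1 M0 subr0 det1 meval0 => /eqP; rewrite oner_eq0.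
Qed.

Definition indet_poly (x : var_t n) : polyring n := 'X_(enum_rank x).

Definition lambda_poly E : 'M[polyring n]_n :=
  \matrix_(u, v) (if (u, v) \in E then indet_poly (inl (u, v)) else 0).

Definition omega_poly B : 'M[polyring n]_n :=
  \matrix_(u, v) (if (u == v) || ((u, v) \in B) then
    indet_poly (inr (if (u <= v)%N then (u, v) else (v, u))) else 0).

Lemma LambdaOn_tofrac E : LambdaOn E = map_mx tofrac (lambda_poly E).
Proof. by apply/matrixP => u v; rewrite !mxE; case: ifP; rewrite ?rmorph0. Qed.

Lemma Omega_tofrac B : Omega B = map_mx tofrac (omega_poly B).
Proof. by apply/matrixP => u v; rewrite !mxE; case: ifP; rewrite ?rmorph0. Qed.

Lemma eval0_lambda_poly E : map_mx eval0 (lambda_poly E) = 0.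
Proof. by apply/matrixP => u v; rewrite !mxE; case: ifP; rewrite ?mevalXU ?meval0. Qed.

Lemma eval0_omega_poly B : map_mx eval0 (omega_poly B) = 0.
Proof. by apply/matrixP => u v; rewrite !mxE; case: ifP; rewrite ?mevalXU ?meval0. Qed.

Lemma unitmx_1B_LambdaOn E : (1%:M - LambdaOn E) \in unitmx.
Proof. by rewrite LambdaOn_tofrac unitmx_1B_tofrac ?eval0_lambda_poly. Qed.

(* The weighted adjacency matrix of [G*_flow]: rows and columns [lshift n i]
   stand for the vertex [i], [rshift n i] for [i']. *)
Definition flow_weight DL DR B : 'M[ratfun n]_(n + n) :=
  block_mx (LambdaOn DL)^T (Omega B) 0 (LambdaOn DR).

Lemma flow_weight_edge DL DR B a b :
  ~~ flow_edge DL DR B a b -> flow_weight DL DR B (unsplit a) (unsplit b) = 0.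
Proof.
case: a b => i [] j /= ab;
  by rewrite ?block_mxEul ?block_mxEur ?block_mxEdl ?block_mxEdr !mxE ?(negbTE ab).
Qed.

Lemma flow_weight_unit DL DR B (A A' : {set 'I_(n + n)}) :
  (1%:M - mask_mx _ A *m flow_weight DL DR B *m mask_mx _ A') \in unitmx.
Proof.
rewrite /flow_weight !LambdaOn_tofrac Omega_tofrac map_trmx -(map_mx0 tofrac).
rewrite -map_block_mx -!(map_mask_mx tofrac) -!map_mxM; apply: unitmx_1B_tofrac.
rewrite !map_mxM map_block_mx -map_trmx eval0_omega_poly !eval0_lambda_poly map_mx0.
by rewrite trmx0 block_mx0 mulmx0 mul0mx.
Qed.

Lemma flow_weight_inverse DL DR B :
  (1%:M - flow_weight DL DR B) *m block_mx (invmx (1%:M - LambdaOn DL))^T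
    (Gamma DL DR B) 0 (invmx (1%:M - LambdaOn DR)) = 1%:M.
Proof.
exact: mulmx_1B_block_inv (mulVmx (unitmx_1B_LambdaOn DL)) (mulmxV (unitmx_1B_LambdaOn DR)).
Qed.

Lemma flow_edge_irrefl D DL DR B : (forall u, (u, u) \notin D) ->
  DL \subset D -> DR \subset D -> irreflexive (flow_edge DL DR B).
Proof.
move=> D_irrefl DL_D DR_D [] i /=; apply/negbTE.
  by apply: contra (D_irrefl i); exact: (subsetP DL_D).
by apply: contra (D_irrefl i); exact: (subsetP DR_D).
Qed.

Lemma rank_Gamma_submx DL DR B (S T : {set 'I_n}) (C R : {set vstar n})
    m (f g : 'I_m -> 'I_n) :
  separating (flow_edge DL DR B) [set inl i | i in S] [set inr t | t in T] C R ->
  (forall i, f i \in S) -> (forall j, g j \in T) ->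
  (\rank (mxsub f g (Gamma DL DR B)) <= #|C|)%N.
Proof.
case=> SR RT_C R_closed fS gT.
have mem_unsplit (X : {set vstar n}) x : (unsplit x \in unsplit @: X) = (x \in X).
  exact/mem_imset/can_inj/unsplitK.
rewrite -(card_imset _ (can_inj unsplitK)).
have -> : mxsub f g (Gamma DL DR B) = mxsub (fun i => unsplit (inl (f i)))
    (fun j => unsplit (inr (g j))) (block_mx (invmx (1%:M - LambdaOn DL))^T
      (Gamma DL DR B) 0 (invmx (1%:M - LambdaOn DR))).
  by apply/matrixP => i j; rewrite [LHS]mxE [RHS]mxE block_mxEur.
apply: (rank_submx_separated (Rg := unsplit @: R)) (flow_weight_inverse DL DR B)
  (flow_weight_unit DL DR B) _ _ _.
- move=> u v; rewrite -[u]splitK -[v]splitK !mem_unsplit => uR uC vR.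
  by apply: flow_weight_edge; exact: (contra (R_closed _ _ uR uC) vR).
- by move=> i; rewrite mem_unsplit (subsetP SR) ?imset_f.
- by move=> j; rewrite !mem_unsplit => gR; rewrite (subsetP RT_C) // inE gR imset_f.
Qed.

End FlowMatrix.

(* Keeps [n] an explicit argument of [lemma3p7]. *)
Unset Implicit Arguments.

Theorem lemma3p7 (n : nat) (D B DL DR : {set 'I_n * 'I_n})
  (hDloop : forall u, (u, u) \notin D)
  (hBloop : forall u, (u, u) \notin B)
  (hBsym : forall u v, ((u, v) \in B) = ((v, u) \in B))
  (hDL : DL \subset D) (hDR : DR \subset D)
  (S T : {set 'I_n}) (hST : #|T| = #|S|) :
  maxflow_lt DL DR B [set inl i | i in S] [set inr t | t in T] #|S| ->
  minor (Gamma DL DR B) hST = 0.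
Proof.
move=> hmax.
have [C [R [C_lt sep]]] := menger_separator (flow_edge_irrefl B hDloop hDL hDR) hmax.
rewrite /minor castmxEsub -mxsub_comp; apply: det_eq0_rank_lt.
by apply: leq_ltn_trans C_lt; apply: rank_Gamma_submx sep _ _ => i; exact: enum_valP.
Qed.
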